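(* Setting: $n$ agents on a connected, undirected weighted graph with Laplacian $L_n$; $L=L_n\otimes I_m$. For each $i$, $\Omega_i\subset\mathbb R^{q_i}$ is closed and convex, $f^i$ is strictly convex on an open set containing $\Omega_i$, $W_i\in\mathbb R^{m\times q_i}$, $d_i\in\mathbb R^m$ with $\sum_id_i=d_0$; $\Omega=\prod_i\Omega_i$, $f(x)=\sum_if^i(x_i)$, $W=[W_1,\dots,W_n]$, $\overline W=\mathrm{diag}\{W_1,\dots,W_n\}$, $d=[d_1^{\rm T},\dots,d_n^{\rm T}]^{\rm T}$; Slater's condition holds. Let $$\mathcal F(x,\lambda,z)=\Big\{\big(p,\ d-\overline Wx-L\lambda-Lz-\overline Wp,\ L\lambda\big):\ p=P_\Omega[x-g+\overline W^{\rm T}\lambda]-x,\ g\in\partial f(x)\Big\}$$ and assume $\mathcal F(x,\lambda,z)$ is convex for all $(x,\lambda,z)\in\Omega\times\mathbb R^{nm}\times\mathbb R^{nm}$. Let $(x^*,\lambda^*,z^* )\in\Omega\times\mathbb R^{nm}\times\mathbb R^{nm}$ be an equilibrium ($0\in\mathcal F(x^*,\lambda^*,z^* )$) and $$V(x,\lambda,z)=f(x)-f(x^* )+(\lambda^* )^{\rm T}(d-\overline Wx)+\tfrac12\|x-x^*\|^2+\tfrac12\|\lambda-\lambda^*\|^2+\tfrac12\|z-z^*\|^2.$$ If $a\in\mathcal L_{\mathcal F}V(x,\lambda,z)$, then there exist $g(x)\in\partial f(x)$ and $g(x^* )\in\partial f(x^* )$ such that $$a\le-\|p\|^2-(x-x^*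 )^{\rm T}(g(x)-g(x^* ))-\lambda^{\rm T}L\lambda\le0,\qquad p=P_\Omega[x-g(x)+\overline W^{\rm T}\lambda]-x.$$
   Context: $\partial f$ is the convex subdifferential; $P_\Omega$ the Euclidean projection onto $\Omega$. For a locally Lipschitz $V$ with Clarke generalized gradient $\partial V$, the set-valued Lie derivative is $\mathcal L_{\mathcal F}V(\xi)=\{a\in\mathbb R:\ \exists v\in\mathcal F(\xi)\text{ with } p^{\rm T}v=a\ \forall p\in\partial V(\xi)\}$. *)

(* abstract reals R : realType; finite-dimensional Euclidean
   spaces are represented as functions  T -> R  on a finite index type T,
   with the standard inner product  dot u v = \sum_k u k * v k. *)
From HB Require Import structures.
From mathcomp Require Import all_boot all_order all_algebra.
From mathcomp Require Import reals.
Set Implicit Arguments. Unset Strict Implicit. Unset Printing Implicit Defensive.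
Import Order.TTheory GRing.Theory Num.Theory.
Local Open Scope ring_scope.

Definition dot {R : realType} {T : finType} (u v : T -> R) : R :=
  \sum_(k : T) u k * v k.
Definition sqn {R : realType} {T : finType} (u : T -> R) : R := dot u u.
Definition vsub {R : realType} {T : finType} (u v : T -> R) : T -> R :=
  fun k => u k - v k.

Definition convex_set {R : realType} {T : finType} (C : (T -> R) -> Prop) :=
  forall u v, C u -> C v -> forall t : R, 0 <= t -> t <= 1 ->
    C (fun k => t * u k + (1 - t) * v k).

Definition open_set {R : realType} {T : finType} (U : (T -> R) -> Prop) :=
  forall x, U x -> exists2 e : R, 0 < e & forall y, sqn (vsub y x) < e -> U y.

Definition closed_set {R : realType} {T : finType} (C : (T -> R) -> Prop) :=
  forall y, (forall e : R, 0 < e -> exists2 c, C c & sqn (vsub y c) < e) -> C y.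

Definition strictly_convex_on {R : realType} {T : finType}
    (U : (T -> R) -> Prop) (f : (T -> R) -> R) :=
  forall u v, U u -> U v -> u <> v -> forall t : R, 0 < t -> t < 1 ->
    f (fun k => t * u k + (1 - t) * v k) < t * f u + (1 - t) * f v.

Definition aff_hull {R : realType} {T : finType} (C : (T -> R) -> Prop)
    (y : T -> R) :=
  exists (N : nat) (pts : 'I_N -> T -> R) (w : 'I_N -> R),
    [/\ forall j, C (pts j), \sum_(j < N) w j = 1 &
        forall k, y k = \sum_(j < N) w j * pts j k].

Definition relint {R : realType} {T : finType} (C : (T -> R) -> Prop)
    (x : T -> R) :=
  C x /\ exists2 e : R, 0 < e &
    forall y, aff_hull C y -> sqn (vsub y x) < e -> C y.

Definition subdiff {R : realType} {T : finType} (D : (T -> R) -> Prop)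
    (f : (T -> R) -> R) (x g : T -> R) :=
  forall y, D y -> f x + dot g (vsub y x) <= f y.

Definition is_proj {R : realType} {T : finType} (C : (T -> R) -> Prop)
    (y p : T -> R) :=
  C p /\ forall w, C w -> sqn (vsub y p) <= sqn (vsub y w).

(* Clarke generalized gradient: p \in dV(xi) iff for every direction v,
   p^T v <= V°(xi; v) := limsup_{y -> xi, t -> 0+} (V(y + t v) - V(y)) / t,
   the limsup inequality being written out in epsilon-delta form. *)
Definition clarke_grad {R : realType} {T : finType} (V : (T -> R) -> R)
    (xi p : T -> R) :=
  forall v : T -> R, forall e : R, 0 < e -> forall delta : R, 0 < delta ->
    exists y : T -> R, exists t : R,
      [/\ sqn (vsub y xi) < delta, 0 < t, t < delta &
          dot p v - e < (V (fun k => y k + t * v k) - V y) / t].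

Definition lie_deriv {R : realType} {T : finType}
    (F : (T -> R) -> (T -> R) -> Prop) (V : (T -> R) -> R) (xi : T -> R)
    (a : R) :=
  exists2 v, F xi v & forall p, clarke_grad V xi p -> dot p v = a.

(* index of the stacked decision variable x = (x_1,...,x_n), x_i in R^{q_i} *)
Definition Xidx (n : nat) (q : 'I_n -> nat) : finType := {i : 'I_n & 'I_(q i)}.
(* index of R^{nm} = (R^m)^n *)
Definition Lidx (n m : nat) : finType := ('I_n * 'I_m)%type.
(* state space index for (x, lambda, z) *)
Definition Sidx (n m : nat) (q : 'I_n -> nat) : finType :=
  (Xidx q + (Lidx n m + Lidx n m))%type.

Definition blk {R : realType} {n : nat} {q : 'I_n -> nat}
    (x : Xidx q -> R) (i : 'I_n) : 'I_(q i) -> R :=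
  fun l => x (@Tagged 'I_n i (fun i => 'I_(q i)) l).
Arguments blk {R n q} x i _.

Definition pack {R : realType} {n m : nat} {q : 'I_n -> nat}
    (x : Xidx q -> R) (lam z : Lidx n m -> R) : Sidx m q -> R :=
  fun s => match s with
           | inl a => x a
           | inr (inl b) => lam b
           | inr (inr b) => z b
           end.
Definition xpart {R : realType} {n m : nat} {q : 'I_n -> nat}
    (xi : Sidx m q -> R) : Xidx q -> R := fun a => xi (inl a).
Definition lpart {R : realType} {n m : nat} {q : 'I_n -> nat}
    (xi : Sidx m q -> R) : Lidx n m -> R := fun b => xi (inr (inl b)).
Definition zpart {R : realType} {n m : nat} {q : 'I_n -> nat}
    (xi : Sidx m q -> R) : Lidx n m -> R := fun b => xi (inr (inr b)).

Definition undirected_weighted_graph {R : realType} {n : nat} (A : 'M[R]_n) :=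
  [/\ forall i j, A i j = A j i, forall i j, 0 <= A i j & forall i, A i i = 0].
Definition graph_connected {R : realType} {n : nat} (A : 'M[R]_n) :=
  forall i j : 'I_n, connect [rel k l | 0 < A k l] i j.
Definition laplacian {R : realType} {n : nat} (A : 'M[R]_n) : 'M[R]_n :=
  \matrix_(i, j) (if i == j then \sum_(k < n) A i k else - A i j).

(* L = L_n (x) I_m acting on R^{nm} *)
Definition Lkron {R : realType} {n m : nat} (Ln : 'M[R]_n)
    (lam : Lidx n m -> R) : Lidx n m -> R :=
  fun ik => \sum_(j < n) Ln ik.1 j * lam (j, ik.2).

(* Wbar = diag{W_1,...,W_n} : R^{sum q_i} -> R^{nm} and its transpose *)
Definition Wbar {R : realType} {n m : nat} {q : 'I_n -> nat}
    (W : forall i, 'M[R]_(m, q i)) (x : Xidx q -> R) : Lidx n m -> R :=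
  fun ik => \sum_(l < q ik.1) W ik.1 ik.2 l * blk x (ik.1) l.
Definition WbarT {R : realType} {n m : nat} {q : 'I_n -> nat}
    (W : forall i, 'M[R]_(m, q i)) (lam : Lidx n m -> R) : Xidx q -> R :=
  fun il => \sum_(k < m) W (tag il) k (tagged il) * lam (tag il, k).
(* W = [W_1,...,W_n] : R^{sum q_i} -> R^m *)
Definition Wrow {R : realType} {n m : nat} {q : 'I_n -> nat}
    (W : forall i, 'M[R]_(m, q i)) (x : Xidx q -> R) : 'I_m -> R :=
  fun k => \sum_(i < n) \sum_(l < q i) W i k l * blk x i l.

Definition Omega {R : realType} {n : nat} {q : 'I_n -> nat}
    (Om : forall i, ('I_(q i) -> R) -> Prop) (x : Xidx q -> R) :=
  forall i, Om i (blk x i).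
Definition fsum {R : realType} {n : nat} {q : 'I_n -> nat}
    (fi : forall i, ('I_(q i) -> R) -> R) (x : Xidx q -> R) : R :=
  \sum_(i < n) fi i (blk x i).

Definition Fmap {R : realType} {n m : nat} {q : 'I_n -> nat}
    (Ln : 'M[R]_n) (W : forall i, 'M[R]_(m, q i)) (d : Lidx n m -> R)
    (Om U : forall i, ('I_(q i) -> R) -> Prop)
    (fi : forall i, ('I_(q i) -> R) -> R)
    (xi v : Sidx m q -> R) : Prop :=
  let x := xpart xi in let lam := lpart xi in let z := zpart xi in
  exists g pi,
    [/\ subdiff (Omega U) (fsum fi) x g,
        is_proj (Omega Om) (fun a => x a - g a + WbarT W lam a) pi &
        let p := vsub pi x in
        v = pack p
              (fun b => d b - Wbar W x b - Lkron Ln lam b - Lkron Ln z b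
                        - Wbar W p b)
              (Lkron Ln lam)].

Definition Vfun {R : realType} {n m : nat} {q : 'I_n -> nat}
    (W : forall i, 'M[R]_(m, q i)) (d : Lidx n m -> R)
    (fi : forall i, ('I_(q i) -> R) -> R)
    (xs : Xidx q -> R) (ls zs : Lidx n m -> R) (xi : Sidx m q -> R) : R :=
  fsum fi (xpart xi) - fsum fi xs
  + dot ls (fun b => d b - Wbar W (xpart xi) b)
  + 2^-1 * sqn (vsub (xpart xi) xs)
  + 2^-1 * sqn (vsub (lpart xi) ls)
  + 2^-1 * sqn (vsub (zpart xi) zs).

From HB Require Import structures.
From mathcomp Require Import all_boot all_order all_algebra.
From mathcomp Require Import reals ring lra.
From mathcomp Require Import boolp.
Import Order.TTheory GRing.Theory Num.Theory.
Local Open Scope ring_scope.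

(* For a subgradient g of f at x, the vector
   zeta = [g - Wbar^T lambda* + x - x*; lambda - lambda*; z - z*] minorizes
   every one-sided difference quotient of V at xi (f is convex and the rest of
   V is quadratic), so it is a Clarke generalized gradient of V and a = zeta^T v
   for the chosen v in F(xi).  The equilibrium equations give L lambda* = 0,
   d = Wbar x* + L z* and x* = P_Omega[x* - g* + Wbar^T lambda*]; with them,
   zeta^T v equals the claimed bound plus the two variational inequalities of
   the projections at x and at x*, both nonpositive.  The bound itself is
   nonpositive by monotonicity of the subdifferential and positive
   semidefiniteness of the Laplacian. *)

Definition near_0plus {R : realType} (P : R -> Prop) :=
  exists2 e : R, 0 < e & forall t, 0 < t -> t < e -> P t.

Lemma near_0plus_forall (R : realType) (I : finType) (P : I -> R -> Prop) :
  (forall i, near_0plus (P i)) -> near_0plus (fun t => forall i, P i t).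
Proof.
move=> HP.
suff [e e0 He] : exists2 e : R, 0 < e &
    forall i t, i \in enum I -> 0 < t -> t < e -> P i t.
  by exists e => // t t0 te i; apply: He; rewrite ?mem_enum.
elim: (enum I) => [|i s [e e0 He]]; first by exists 1.
have [e1 e10 He1] := HP i.
exists (Num.min e e1) => [|j t]; first by rewrite lt_min e0 e10.
rewrite inE lt_min => /orP[/eqP-> | js] t0 /andP[te te1]; [exact: He1 | exact: He].
Qed.

Section Euclidean.
Context {R : realType} {T : finType}.
Implicit Types (u v w y p c : T -> R) (C D : (T -> R) -> Prop).

Lemma sqn_ge0 u : 0 <= sqn u.
Proof. by apply: sumr_ge0 => k _; rewrite -expr2 sqr_ge0. Qed.

Lemma sqn_vsubxx u : sqn (vsub u u) = 0.
Proof. by rewrite /sqn /dot big1 // => k _; rewrite /vsub subrr mul0r. Qed.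

Lemma sqn_shift u w c (t : R) :
  sqn (vsub (fun k => u k + t * w k) c) =
  sqn (vsub u c) + 2 * t * dot (vsub u c) w + t ^+ 2 * sqn w.
Proof.
by rewrite /sqn /dot /vsub !mulr_sumr -!big_split /=; apply: eq_bigr => k _; ring.
Qed.

Lemma le0_of_forall_le_mulr (c N : R) :
  0 <= N -> (forall t, 0 < t -> t <= 1 -> c <= t * N) -> c <= 0.
Proof.
move=> N0 Hc; rewrite leNgt; apply/negP => c0.
have Nc : 0 < N + c by lra.
have := Hc (c / (N + c)) (divr_gt0 c0 Nc).
rewrite ler_pdivrMr // mul1r mulrAC ler_pdivlMr // => /(_ ltac:(lra)).
nra.
Qed.

Lemma is_proj_obtuse {C y p w} :
  convex_set C -> is_proj C y p -> C w -> dot (vsub y p) (vsub w p) <= 0.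
Proof.
move=> Cconv [Cp Pmin] Cw.
apply: (@le0_of_forall_le_mulr _ (2^-1 * sqn (vsub w p))).
  by rewrite mulr_ge0 ?invr_ge0 ?sqn_ge0.
move=> t t0 t1.
have := Pmin _ (Cconv _ _ Cw Cp t (ltW t0) t1).
have -> : sqn (vsub y (fun k => t * w k + (1 - t) * p k)) =
    sqn (vsub y p) - 2 * t * dot (vsub y p) (vsub w p) + t ^+ 2 * sqn (vsub w p).
  rewrite /sqn /dot /vsub !mulr_sumr -sumrB -big_split /=.
  by apply: eq_bigr => k _; ring.
rewrite -subr_ge0 => h.
have : t * dot (vsub y p) (vsub w p) <= t * (t * (2^-1 * sqn (vsub w p))) by lra.
by rewrite ler_pM2l.
Qed.

Lemma subdiff_monotone {D} {f : (T -> R) -> R} {u w g h} :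
  D u -> D w -> subdiff D f u g -> subdiff D f w h ->
  0 <= dot (vsub u w) (vsub g h).
Proof.
move=> Du Dw gu hw; have := gu _ Dw; have := hw _ Du.
have -> : dot (vsub u w) (vsub g h) = - (dot g (vsub w u) + dot h (vsub u w)).
  by rewrite /dot -big_split -sumrN; apply: eq_bigr => k _; rewrite /vsub /=; ring.
lra.
Qed.

Lemma open_set_ray U u w :
  open_set U -> U u -> near_0plus (fun t => U (fun k => u k + t * w k)).
Proof.
move=> Uopen Uu; have [r r0 Hr] := Uopen _ Uu.
have S0 := sqn_ge0 w.
exists (Num.min 1 (r / (sqn w + 1))); first by rewrite lt_min ltr01 divr_gt0 //; lra.
move=> t t0; rewrite lt_min ltr_pdivlMr; last by lra.
case/andP=> t1 tr; apply: Hr.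
have -> : sqn (vsub (fun k => u k + t * w k) u) = t ^+ 2 * sqn w.
  by rewrite sqn_shift sqn_vsubxx /dot big1 ?mulr0 ?addr0 ?add0r // => k _;
     rewrite /vsub subrr mul0r.
have : 0 <= (1 - t) * t * sqn w by rewrite !mulr_ge0 //; lra.
nra.
Qed.

Lemma clarke_grad_of_directional_minorant (V : (T -> R) -> R) xi p :
  (forall v, near_0plus (fun t => t * dot p v <= V (fun k => xi k + t * v k) - V xi)) ->
  clarke_grad V xi p.
Proof.
move=> Hmin v e e0 delta d0; have [t0 t00 Ht] := Hmin v.
have min0 : 0 < Num.min t0 delta by rewrite lt_min t00 d0.
pose t := Num.min t0 delta / 2.
have tpos : 0 < t by rewrite divr_gt0.
have /andP[tt0 tdelta] : (t < t0) && (t < delta) by rewrite -lt_min /t; lra.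
exists xi, t; split; rewrite ?sqn_vsubxx //.
have := Ht t tpos tt0; rewrite -ler_pdivlMl // mulrC; lra.
Qed.

End Euclidean.

Lemma sum_Lidx (R : realType) n m (F : Lidx n m -> R) :
  \sum_(b : Lidx n m) F b = \sum_(i < n) \sum_(k < m) F (i, k).
Proof. by rewrite pair_bigA; apply: eq_bigr => -[i k]. Qed.

Lemma sum_Xidx (R : realType) n (q : 'I_n -> nat) (F : Xidx q -> R) :
  \sum_(b : Xidx q) F b =
  \sum_(i < n) \sum_(l < q i) F (Tagged (fun i => 'I_(q i)) l).
Proof. by rewrite sig_big_dep; apply: eq_bigr => -[i l]. Qed.

Section Laplacian.
Context {R : realType} {n : nat}.
Variable A : 'M[R]_n.
Hypothesis A_sym : forall i j, A i j = A j i.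

Lemma laplacian_sym i j : laplacian A i j = laplacian A j i.
Proof. by rewrite !mxE eq_sym; case: eqP => [->|] //; rewrite A_sym. Qed.

Lemma dot_Lkron_sym m (mu nu : Lidx n m -> R) :
  dot mu (Lkron (laplacian A) nu) = dot nu (Lkron (laplacian A) mu).
Proof.
rewrite /dot /Lkron !sum_Lidx [LHS]exchange_big [RHS]exchange_big /=.
apply: eq_bigr => k _.
under eq_bigr do rewrite mulr_sumr.
under [RHS]eq_bigr do rewrite mulr_sumr.
rewrite exchange_big /=; apply: eq_bigr => i _; apply: eq_bigr => j _.
by rewrite laplacian_sym; ring.
Qed.

Lemma laplacian_row (a : 'I_n -> R) i : A i i = 0 ->
  \sum_(j < n) laplacian A i j * a j = \sum_(j < n) A i j * (a i - a j).
Proof.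
move=> Aii; have -> : \sum_(j < n) A i j * (a i - a j) =
    (\sum_(l < n) A i l) * a i - \sum_(j < n) A i j * a j.
  by rewrite mulr_suml -sumrB; apply: eq_bigr => j _; ring.
rewrite (bigD1 i) //= [X in _ = _ - X](bigD1 i) //= !mxE eqxx Aii mul0r add0r.
congr (_ + _); rewrite -sumrN; apply: eq_bigr => j /negPf ji.
by rewrite mxE eq_sym ji mulNr.
Qed.

Lemma laplacian_quad_eq (a : 'I_n -> R) : (forall i, A i i = 0) ->
  2 * \sum_(i < n) a i * \sum_(j < n) laplacian A i j * a j =
  \sum_(i < n) \sum_(j < n) A i j * (a i - a j) ^+ 2.
Proof.
move=> A0; pose S := \sum_(i < n) \sum_(j < n) A i j * (a i * (a i - a j)).
have -> : \sum_(i < n) a i * \sum_(j < n) laplacian A i j * a j = S.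
  apply: eq_bigr => i _; rewrite laplacian_row // mulr_sumr.
  by apply: eq_bigr => j _; ring.
have S_swap : S = \sum_(i < n) \sum_(j < n) A i j * (a j * (a j - a i)).
  by rewrite /S exchange_big; apply: eq_bigr => i _; apply: eq_bigr => j _; rewrite A_sym.
rewrite mulr2n mulrDl mul1r {2}S_swap /S -big_split /=.
by apply: eq_bigr => i _; rewrite -big_split; apply: eq_bigr => j _ /=; ring.
Qed.

End Laplacian.

Lemma dot_Lkron_ge0 {R : realType} {n m} {A : 'M[R]_n} (mu : Lidx n m -> R) :
  undirected_weighted_graph A -> 0 <= dot mu (Lkron (laplacian A) mu).
Proof.
case=> A_sym A_ge0 A0; rewrite /dot /Lkron sum_Lidx exchange_big /=.
apply: sumr_ge0 => k _; rewrite -(@pmulr_rge0 _ 2) //.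
rewrite (laplacian_quad_eq _ A_sym (fun i => mu (i, k)) A0).
by do 2!apply: sumr_ge0 => ? _; rewrite mulr_ge0 ?sqr_ge0.
Qed.

Lemma Lkron_vsub (R : realType) n m (L : 'M[R]_n) (u w : Lidx n m -> R) b :
  Lkron L (vsub u w) b = Lkron L u b - Lkron L w b.
Proof. by rewrite /Lkron /vsub -sumrB; apply: eq_bigr => j _; ring. Qed.

Section BlockOperators.
Context {R : realType} {n m : nat} {q : 'I_n -> nat}.
Variable W : forall i, 'M[R]_(m, q i).

Lemma dot_Wbar (mu : Lidx n m -> R) (w : Xidx q -> R) :
  dot mu (Wbar W w) = dot (WbarT W mu) w.
Proof.
rewrite /dot /Wbar /WbarT /blk /= sum_Lidx sum_Xidx; apply: eq_bigr => i _ /=.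
under eq_bigr do rewrite mulr_sumr.
rewrite exchange_big /=; apply: eq_bigr => l _; rewrite mulr_suml.
by apply: eq_bigr => k _; ring.
Qed.

Lemma Wbar_shift (u w : Xidx q -> R) (t : R) b :
  Wbar W (fun a => u a + t * w a) b = Wbar W u b + t * Wbar W w b.
Proof. by rewrite /Wbar /blk mulr_sumr -big_split; apply: eq_bigr => l _ /=; ring. Qed.

Lemma Wbar_vsub (u w : Xidx q -> R) b :
  Wbar W (vsub u w) b = Wbar W u b - Wbar W w b.
Proof. by rewrite /Wbar /blk /vsub -sumrB; apply: eq_bigr => l _ /=; ring. Qed.

Lemma WbarT_vsub (u w : Lidx n m -> R) a :
  WbarT W (vsub u w) a = WbarT W u a - WbarT W w a.
Proof. by rewrite /WbarT /vsub -sumrB; apply: eq_bigr => j _; ring. Qed.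

End BlockOperators.

Section Parts.
Context {R : realType} {n m : nat} {q : 'I_n -> nat}.
Variables (x : Xidx q -> R) (lam z : Lidx n m -> R).

Lemma xpart_pack : xpart (pack x lam z) = x. Proof. by []. Qed.
Lemma lpart_pack : lpart (pack x lam z) = lam. Proof. by []. Qed.
Lemma zpart_pack : zpart (pack x lam z) = z. Proof. by []. Qed.

End Parts.

Lemma dot_parts (R : realType) n m (q : 'I_n -> nat) (xi v : Sidx m q -> R) :
  dot xi v = dot (xpart xi) (xpart v) + dot (lpart xi) (lpart v) + dot (zpart xi) (zpart v).
Proof. by rewrite /dot big_sumType /= big_sumType /= addrA. Qed.

Section ProductSets.
Context {R : realType} {n : nat} {q : 'I_n -> nat}.
Implicit Types (C : forall i, ('I_(q i) -> R) -> Prop) (u w : Xidx q -> R).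

Lemma Omega_convex C : (forall i, convex_set (C i)) -> convex_set (Omega C).
Proof. by move=> Cconv u w Cu Cw t t0 t1 i; apply: Cconv. Qed.

Lemma Omega_open_ray C u w : (forall i, open_set (C i)) -> Omega C u ->
  near_0plus (fun t : R => Omega C (fun a => u a + t * w a)).
Proof. by move=> Copen Cu; apply: near_0plus_forall => i; apply: open_set_ray. Qed.

End ProductSets.

Definition Vgrad {R : realType} {n m : nat} {q : 'I_n -> nat}
    (W : forall i, 'M[R]_(m, q i)) (xs : Xidx q -> R) (ls zs : Lidx n m -> R)
    (xi : Sidx m q -> R) (g : Xidx q -> R) : Sidx m q -> R :=
  pack (fun a => g a - WbarT W ls a + (xpart xi a - xs a))
       (vsub (lpart xi) ls) (vsub (zpart xi) zs).

Section Lyapunov.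
Context {R : realType} {n m : nat} {q : 'I_n -> nat}.
Context {U : forall i, ('I_(q i) -> R) -> Prop} {fi : forall i, ('I_(q i) -> R) -> R}.
Context {W : forall i, 'M[R]_(m, q i)} {dv : Lidx n m -> R}.
Context {xs : Xidx q -> R} {ls zs : Lidx n m -> R}.

Lemma Vfun_directional_minorant xi v g (t : R) : 0 < t ->
  Omega U (fun a => xpart xi a + t * xpart v a) ->
  subdiff (Omega U) (fsum fi) (xpart xi) g ->
  t * dot (Vgrad W xs ls zs xi g) v <=
  Vfun W dv fi xs ls zs (fun k => xi k + t * v k) - Vfun W dv fi xs ls zs xi.
Proof.
move=> t0 Ushift gx; have := gx _ Ushift.
rewrite /Vfun.
have [-> -> ->] : [/\ xpart (fun k => xi k + t * v k) = (fun a => xpart xi a + t * xpart v a),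
    lpart (fun k => xi k + t * v k) = (fun b => lpart xi b + t * lpart v b) &
    zpart (fun k => xi k + t * v k) = (fun b => zpart xi b + t * zpart v b)] by [].
rewrite !sqn_shift.
have -> : dot g (vsub (fun a => xpart xi a + t * xpart v a) (xpart xi)) =
    t * dot g (xpart v).
  by rewrite /dot /vsub mulr_sumr; apply: eq_bigr => k _; ring.
have -> : dot ls (fun b => dv b - Wbar W (fun a => xpart xi a + t * xpart v a) b) =
    dot ls (fun b => dv b - Wbar W (xpart xi) b) - t * dot (WbarT W ls) (xpart v).
  rewrite -dot_Wbar /dot mulr_sumr -sumrB; apply: eq_bigr => b _.
  by rewrite Wbar_shift; ring.
have -> : dot (Vgrad W xs ls zs xi g) v = dot g (xpart v) - dot (WbarT W ls) (xpart v)
    + dot (vsub (xpart xi) xs) (xpart v)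
    + dot (vsub (lpart xi) ls) (lpart v) + dot (vsub (zpart xi) zs) (zpart v).
  rewrite dot_parts /Vgrad /=; congr (_ + _ + _).
  by rewrite /dot /vsub -sumrB -big_split; apply: eq_bigr => k _; rewrite /xpart /=; ring.
have := sqn_ge0 (xpart v); have := sqn_ge0 (lpart v); have := sqn_ge0 (zpart v).
nra.
Qed.

Lemma clarke_grad_Vgrad (xi : Sidx m q -> R) (g : Xidx q -> R) :
  (forall i, open_set (U i)) ->
  Omega U (xpart xi) -> subdiff (Omega U) (fsum fi) (xpart xi) g ->
  clarke_grad (Vfun W dv fi xs ls zs) xi (Vgrad W xs ls zs xi g).
Proof.
move=> Uopen Ux gx; apply: clarke_grad_of_directional_minorant => v.
have [e e0 He] := Omega_open_ray _ _ (xpart v) Uopen Ux.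
by exists e => // t t0 te; apply: Vfun_directional_minorant => //; apply: He.
Qed.

End Lyapunov.

Lemma Fmap_equilibrium {R : realType} {n m} {q : 'I_n -> nat} {Ln : 'M[R]_n}
    {W : forall i, 'M[R]_(m, q i)} {dv : Lidx n m -> R}
    {Om U : forall i, ('I_(q i) -> R) -> Prop} {fi : forall i, ('I_(q i) -> R) -> R}
    {xs : Xidx q -> R} {ls zs : Lidx n m -> R} :
  Fmap Ln W dv Om U fi (pack xs ls zs) (fun _ => 0) ->
  exists2 gs, subdiff (Omega U) (fsum fi) xs gs &
    [/\ is_proj (Omega Om) (fun a => xs a - gs a + WbarT W ls a) xs,
        forall b, Lkron Ln ls b = 0 &
        forall b, dv b = Wbar W xs b + Lkron Ln zs b].
Proof.
case=> gs [pis [gxs proj_s /= F0]].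
rewrite xpart_pack lpart_pack zpart_pack in gxs proj_s F0; exists gs => //.
have pis_xs : pis = xs.
  apply/funext => a.
  by have := congr1 (fun f => f (inl a)) F0; rewrite /vsub /=; lra.
have Lls0 b : Lkron Ln ls b = 0 by have := congr1 (fun f => f (inr (inr b))) F0.
subst pis; split => // b.
have := congr1 (fun f => f (inr (inl b))) F0; rewrite /= Lls0.
have -> : Wbar W (vsub xs xs) b = 0.
  by rewrite /Wbar big1 // => l _; rewrite /blk /vsub subrr mulr0.
lra.
Qed.

Section LieDerivative.
Context {R : realType} {n m : nat} {q : 'I_n -> nat}.
Context {A : 'M[R]_n} {W : forall i, 'M[R]_(m, q i)} {dv : Lidx n m -> R}.
Context {xs : Xidx q -> R} {ls zs : Lidx n m -> R}.
Hypothesis A_sym : forall i j, A i j = A j i.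
Hypothesis Lls0 : forall b, Lkron (laplacian A) ls b = 0.
Hypothesis dv_eq : forall b, dv b = Wbar W xs b + Lkron (laplacian A) zs b.

Lemma Vgrad_dot_Fmap (xi : Sidx m q -> R) (g gs pi : Xidx q -> R) :
  let x := xpart xi in let lam := lpart xi in let z := zpart xi in
  let p := vsub pi x in
  dot (Vgrad W xs ls zs xi g)
      (pack p (fun b => dv b - Wbar W x b - Lkron (laplacian A) lam b
                        - Lkron (laplacian A) z b - Wbar W p b)
              (Lkron (laplacian A) lam)) =
  - sqn p - dot (vsub x xs) (vsub g gs) - dot lam (Lkron (laplacian A) lam)
  + dot (vsub (fun a => x a - g a + WbarT W lam a) pi) (vsub xs pi)
  + dot (vsub (fun a => xs a - gs a + WbarT W ls a) xs) (vsub x xs).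
Proof.
move=> x lam z p; set L := laplacian A; set mu := vsub lam ls.
have Lmu b : Lkron L mu b = Lkron L lam b by rewrite Lkron_vsub Lls0 subr0.
have dual : dot mu (fun b => dv b - Wbar W x b - Lkron L lam b - Lkron L z b - Wbar W p b)
    + dot (vsub z zs) (Lkron L lam)
    = - dot (WbarT W mu) (vsub x xs) - dot (WbarT W mu) p - dot lam (Lkron L lam).
  have -> : dot (vsub z zs) (Lkron L lam) = dot mu (Lkron L (vsub z zs)).
    by rewrite [RHS]dot_Lkron_sym //; apply: eq_bigr => b _; rewrite Lmu.
  have -> : dot lam (Lkron L lam) = dot mu (Lkron L mu).
    have -> : dot mu (Lkron L mu) = dot mu (Lkron L lam).
      by apply: eq_bigr => b _; rewrite Lmu.
    by rewrite [RHS]dot_Lkron_sym //; apply: eq_bigr => b _; rewrite Lmu.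
  rewrite -!dot_Wbar /dot -!sumrN -!big_split /=; apply: eq_bigr => b _.
  by rewrite dv_eq Wbar_vsub !Lkron_vsub Lls0; ring.
have primal : dot (fun a => g a - WbarT W ls a + (x a - xs a)) p
    - dot (WbarT W mu) (vsub x xs) - dot (WbarT W mu) p
    = - sqn p - dot (vsub x xs) (vsub g gs)
      + dot (vsub (fun a => x a - g a + WbarT W lam a) pi) (vsub xs pi)
      + dot (vsub (fun a => xs a - gs a + WbarT W ls a) xs) (vsub x xs).
  rewrite /sqn /dot -!sumrN -!big_split /=; apply: eq_bigr => a _.
  by rewrite /p /mu WbarT_vsub /vsub; ring.
rewrite dot_parts /Vgrad xpart_pack lpart_pack zpart_pack -/x -/lam -/z -/mu.
lra.
Qed.
End LieDerivative.

Theorem lemma8 (R : realType) (n m : nat) (q : 'I_n -> nat)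
    (A : 'M[R]_n)
    (Om U : forall i : 'I_n, ('I_(q i) -> R) -> Prop)
    (fi : forall i : 'I_n, ('I_(q i) -> R) -> R)
    (W : forall i : 'I_n, 'M[R]_(m, q i))
    (d : 'I_n -> 'I_m -> R) (d0 : 'I_m -> R)
    (xs : Xidx q -> R) (ls zs : Lidx n m -> R)
    (xi : Sidx m q -> R) (a : R) :
  undirected_weighted_graph A -> graph_connected A ->
  (forall i, closed_set (Om i) /\ convex_set (Om i)) ->
  (forall i, [/\ open_set (U i), convex_set (U i),
                 (forall y, Om i y -> U i y) &
                 strictly_convex_on (U i) (fi i)]) ->
  (forall k, \sum_(i < n) d i k = d0 k) ->
  (* Slater's condition *)
  (exists2 x0 : Xidx q -> R, relint (Omega Om) x0 & forall k, Wrow W x0 k = d0 k) ->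
  let dv : Lidx n m -> R := fun ik => d ik.1 ik.2 in
  let F := Fmap (laplacian A) W dv Om U fi in
  (forall xi', Omega Om (xpart xi') -> convex_set (F xi')) ->
  (* (xs, ls, zs) is an equilibrium *)
  Omega Om xs -> F (pack xs ls zs) (fun _ => 0) ->
  Omega Om (xpart xi) ->
  lie_deriv F (Vfun W dv fi xs ls zs) xi a ->
  exists gx gs : Xidx q -> R,
    [/\ subdiff (Omega U) (fsum fi) (xpart xi) gx,
        subdiff (Omega U) (fsum fi) xs gs &
        exists2 pi, is_proj (Omega Om)
                      (fun b => xpart xi b - gx b + WbarT W (lpart xi) b) pi &
          let p := vsub pi (xpart xi) in
          a <= - sqn p - dot (vsub (xpart xi) xs) (vsub gx gs)
               - dot (lpart xi) (Lkron (laplacian A) (lpart xi))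
          /\ - sqn p - dot (vsub (xpart xi) xs) (vsub gx gs)
               - dot (lpart xi) (Lkron (laplacian A) (lpart xi)) <= 0].
Proof.
move=> graphA _ Om_cc Ufacts _ _ dv F _ Oxs equil Ox [v Fv Vlie].
have [A_sym _ _] := graphA.
have Uopen i : open_set (U i) by case: (Ufacts i).
have OmU x : Omega Om x -> Omega U x.
  by move=> Omx i; case: (Ufacts i) => _ _ OmUi _; exact: OmUi.
have Omconv : convex_set (Omega Om) by apply: Omega_convex => i; case: (Om_cc i).
have [gs gxs [proj_s Lls0 dv_eq]] := Fmap_equilibrium equil.
case: Fv => g [pi [gx proj_x /= v_eq]].
have := Vlie _ (clarke_grad_Vgrad xi g Uopen (OmU _ Ox) gx).
rewrite v_eq (Vgrad_dot_Fmap A_sym Lls0 dv_eq xi g gs pi) => <-.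
exists g, gs; split => //; exists pi => //=.
have := is_proj_obtuse Omconv proj_x Oxs; have := is_proj_obtuse Omconv proj_s Ox.
have := subdiff_monotone (OmU _ Ox) (OmU _ Oxs) gx gxs.
have := sqn_ge0 (vsub pi (xpart xi)); have := dot_Lkron_ge0 (lpart xi) graphA.
lra.
Qed.
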